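(* Let $M,N\in su(1,1)$ be linearly independent and suppose that the set $\{u\in\mathbb{R}\mid \langle M+uN,\,M^{\dagger}+uN^{\dagger}\rangle<0\}$ is nonempty. Then $M$, $N$ and $[M,N]=MN-NM$ form a basis of $su(1,1)$ (as a real vector space).
   Context: $su(1,1)$ denotes the three-dimensional real Lie algebra of $2\times 2$ complex matrices spanned over $\mathbb{R}$ by $K_x=\frac12\begin{pmatrix}0&-i\\ i&0\end{pmatrix}$, $K_y=\frac12\begin{pmatrix}0&-1\\-1&0\end{pmatrix}$, $K_z=\frac12\begin{pmatrix}-i&0\\0&i\end{pmatrix}$. For matrices $M,N$ the inner product is $\langle M,N\rangle=2\,\mathrm{Tr}(MN^{\dagger})$, where $N^{\dagger}$ is the conjugate transpose of $N$. *)

From HB Require Import structures.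
From mathcomp Require Import all_boot all_order all_algebra.
From mathcomp Require Import complex.
Set Implicit Arguments. Unset Strict Implicit. Unset Printing Implicit Defensive.
Import Order.TTheory GRing.Theory Num.Theory.
Local Open Scope ring_scope.

Section Defs.
Variable R : rcfType.
Local Notation C := R[i].

Definition mx2 (a b c d : C) : 'M[C]_2 :=
  \matrix_(i < 2, j < 2)
    (if (i : nat) == 0%N then (if (j : nat) == 0%N then a else b)
     else (if (j : nat) == 0%N then c else d)).

Definition iC : C := Complex 0 1.
Definition half : C := (2%:R)^-1.

Definition Kx : 'M[C]_2 := half *: mx2 0 (- iC) iC 0.
Definition Ky : 'M[C]_2 := half *: mx2 0 (-1) (-1) 0.
Definition Kz : 'M[C]_2 := half *: mx2 (- iC) 0 0 iC.

Definition rsc (r : R) (A : 'M[C]_2) : 'M[C]_2 := (real_complex R r) *: A.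

Definition su11 (A : 'M[C]_2) : Prop :=
  exists a b c : R, A = rsc a Kx + rsc b Ky + rsc c Kz.

Definition adj (A : 'M[C]_2) : 'M[C]_2 := map_mx (@conjc R) A^T.

Definition inner (A B : 'M[C]_2) : C := 2%:R * \tr (A *m adj B).

Definition lie_bracket (A B : 'M[C]_2) : 'M[C]_2 := A *m B - B *m A.

Definition rlin_indep2 (A B : 'M[C]_2) : Prop :=
  forall a b : R, rsc a A + rsc b B = 0 -> a = 0 /\ b = 0.

Definition rlin_indep3 (A B D : 'M[C]_2) : Prop :=
  forall a b c : R, rsc a A + rsc b B + rsc c D = 0 -> [/\ a = 0, b = 0 & c = 0].

Definition su11_basis (A B D : 'M[C]_2) : Prop :=
  [/\ su11 A, su11 B, su11 D, rlin_indep3 A B D &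
      forall X, su11 X -> exists a b c : R, X = rsc a A + rsc b B + rsc c D].
End Defs.

(** In coordinates [(a, b, c)] with respect to [Kx, Ky, Kz], the form
    [X |-> <X, X^dagger>] is the Minkowski form [a^2 + b^2 - c^2] and the
    bracket is a Lorentzian cross product [w = x \times y], orthogonal to
    [x] and [y], with [<w, w> = <x, y>^2 - <x, x> <y, y>].  The hypothesis
    says the plane spanned by [M] and [N] contains a timelike vector [t];
    the orthogonal complement of [t] is spacelike, so the plane has
    Lorentzian signature and [<w, w> > 0].  Pairing a vanishing combination
    of [x, y, w] with [w] kills its [w]-coefficient, whence [x, y, w] are
    independent, hence a basis of the three-dimensional space. *)
From Pilot Require Import Defs.
From HB Require Import structures.
From mathcomp Require Import all_boot all_order all_algebra.
From mathcomp Require Import complex ring lra.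
Import Order.TTheory GRing.Theory Num.Theory.
Set Implicit Arguments. Unset Strict Implicit.
Local Open Scope ring_scope.

Lemma rV3P (T : Type) (x y : 'rV[T]_3) :
  x 0 0 = y 0 0 -> x 0 1 = y 0 1 -> x 0 2 = y 0 2 -> x = y.
Proof.
move=> e0 e1 e2; apply/rowP; case=> [[|[|[|]]] lt3] //.
- by rewrite (_ : Ordinal lt3 = 0) //; exact: val_inj.
- by rewrite (_ : Ordinal lt3 = 1) //; exact: val_inj.
- by rewrite (_ : Ordinal lt3 = 2) //; exact: val_inj.
Qed.

Section Independence.
Variables (K : pzRingType) (V : lmodType K).

Definition indep2 (x y : V) :=
  forall a b : K, a *: x + b *: y = 0 -> a = 0 /\ b = 0.

Definition indep3 (x y z : V) :=
  forall a b c : K, a *: x + b *: y + c *: z = 0 -> [/\ a = 0, b = 0 & c = 0].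

Lemma indep2_addZl (x y : V) u : indep2 x y -> indep2 (x + u *: y) y.
Proof.
move=> xy a b; rewrite scalerDr scalerA -addrA -scalerDl => /xy[-> ab0].
by split=> //; move: ab0; rewrite mul0r add0r.
Qed.

End Independence.

Lemma indep3_span (K : fieldType) (x y z : 'rV[K]_3) :
  indep3 x y z -> forall v, exists a b c, v = a *: x + b *: y + c *: z.
Proof.
move=> xyz v; pose X := [tuple x; y; z].
have freeX : free X.
  apply/freeP => k; rewrite !big_ord_recl big_ord0 addr0 addrA /= => /xyz[k0 k1 k2].
  by case=> [[|[|[|]]] ?] //; [rewrite -k0|rewrite -k1|rewrite -k2]; congr k; apply: val_inj.
have basisX : basis_of fullv X by rewrite basisEfree freeX subvf dimvf /dim /= mul1n.
exists (coord X 0 v), (coord X 1 v), (coord X 2 v).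
rewrite {1}(coord_basis basisX (memvf v)) !big_ord_recl big_ord0 addr0 addrA.
by congr (coord X _ v *: _ + coord X _ v *: _ + coord X _ v *: _); apply: val_inj.
Qed.

Section MinkowskiForm.
Variable R : comNzRingType.
Local Notation vec := 'rV[R]_3.

Definition mdot (x y : vec) : R := x 0 0 * y 0 0 + x 0 1 * y 0 1 - x 0 2 * y 0 2.

Definition mcross (x y : vec) : vec :=
  \row_i [:: x 0 1 * y 0 2 - x 0 2 * y 0 1; x 0 2 * y 0 0 - x 0 0 * y 0 2;
             x 0 1 * y 0 0 - x 0 0 * y 0 1]`_i.

Lemma mdotC x y : mdot x y = mdot y x.
Proof. by rewrite /mdot; ring. Qed.

Lemma mdot0l x : mdot 0 x = 0.
Proof. by rewrite /mdot !mxE; ring. Qed.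

Lemma mdotDl x y z : mdot (x + y) z = mdot x z + mdot y z.
Proof. by rewrite /mdot !mxE /=; ring. Qed.

Lemma mdotZl a x y : mdot (a *: x) y = a * mdot x y.
Proof. by rewrite /mdot !mxE /=; ring. Qed.

Lemma mdot_mcrossl x y : mdot (mcross x y) x = 0.
Proof. by rewrite /mdot !mxE /=; ring. Qed.

Lemma mdot_mcrossr x y : mdot (mcross x y) y = 0.
Proof. by rewrite /mdot !mxE /=; ring. Qed.

Lemma mdot_mcross x y :
  mdot (mcross x y) (mcross x y) = mdot x y ^+ 2 - mdot x x * mdot y y.
Proof. by rewrite /mdot !mxE /=; ring. Qed.

Lemma mcrossDZl x y u : mcross (x + u *: y) y = mcross x y.
Proof.
by apply/rowP => i; rewrite /mcross !mxE; case: i => [[|[|[|]]] ?] //=; ring.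
Qed.

End MinkowskiForm.

Lemma indep3_mcross (R : idomainType) (x y : 'rV[R]_3) :
  indep2 x y -> mdot (mcross x y) (mcross x y) != 0 -> indep3 x y (mcross x y).
Proof.
move=> xy ww a b c abc.
have c0 : c = 0.
  have := congr1 (fun v => mdot v (mcross x y)) abc.
  rewrite !mdotDl !mdotZl (mdotC x) (mdotC y) mdot_mcrossl mdot_mcrossr.
  by rewrite mdot0l !mulr0 !add0r => /eqP; rewrite mulf_eq0 (negbTE ww) orbF => /eqP.
by move: abc; rewrite c0 scale0r addr0 => /xy[a0 b0].
Qed.

Section Timelike.
Variable R : realFieldType.
Local Notation vec := 'rV[R]_3.

Lemma mdot_orth_timelike_gt0 (t x : vec) :
  mdot t t < 0 -> mdot x t = 0 -> x != 0 -> 0 < mdot x x.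
Proof.
rewrite /mdot => tt xt; apply: contraNT; rewrite -leNgt => xx.
set a := x 0 0 in xt xx *; set b := x 0 1 in xt xx *; set c := x 0 2 in xt xx *.
set p := t 0 0 in tt xt; set q := t 0 1 in tt xt; set r := t 0 2 in tt xt.
have lagrange : (a * p + b * q) ^+ 2 + (a * q - b * p) ^+ 2
                = (a ^+ 2 + b ^+ 2) * (p ^+ 2 + q ^+ 2) by ring.
have ab0 : a ^+ 2 + b ^+ 2 = 0.
  apply/eqP; rewrite eq_le addr_ge0 ?sqr_ge0 // andbT leNgt; apply/negP => s_gt0.
  have : (a ^+ 2 + b ^+ 2) * (p ^+ 2 + q ^+ 2) < (a ^+ 2 + b ^+ 2) * r ^+ 2.
    by rewrite ltr_pM2l //; lra.
  have cr : a * p + b * q = c * r by lra.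
  have : (a ^+ 2 + b ^+ 2) * r ^+ 2 <= (c * r) ^+ 2.
    by rewrite exprMn ler_wpM2r ?sqr_ge0 //; lra.
  have : 0 <= (a * q - b * p) ^+ 2 by exact: sqr_ge0.
  rewrite -cr; lra.
have a0 : a = 0 by nra.
have b0 : b = 0 by nra.
have c0 : c = 0.
  have r_neq0 : r != 0 by apply/eqP => r0; move: tt; rewrite r0; nra.
  have /eqP : c * r = 0 by move: xt; rewrite a0 b0; lra.
  by rewrite mulf_eq0 (negbTE r_neq0) orbF => /eqP.
by apply/eqP/rV3P; rewrite mxE.
Qed.

Lemma mdot_mcross_gt0_timelike (x y : vec) :
  indep2 x y -> mdot x x < 0 -> 0 < mdot (mcross x y) (mcross x y).
Proof.
move=> xy xx; pose s := mdot x y / mdot x x; pose z := y - s *: x.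
have xx_neq0 : mdot x x != 0 by rewrite lt_eqF.
have zx : mdot z x = 0.
  by rewrite /z mdotDl -scaleNr mdotZl (mdotC y) /s mulNr divfK // subrr.
have z_neq0 : z != 0.
  apply/eqP => z0; have yx0 : (- s) *: x + 1 *: y = 0 by rewrite scale1r addrC scaleNr.
  by have [_ /eqP] := xy _ _ yx0; rewrite oner_eq0.
have zz_gt0 := mdot_orth_timelike_gt0 xx zx z_neq0.
have zzE : mdot z z = mdot y y - s * mdot x y.
  rewrite {1}/z mdotDl -scaleNr mdotZl (mdotC x) zx mulr0 addr0.
  by rewrite mdotC /z mdotDl -scaleNr mdotZl mulNr.
have sE : mdot x x * s = mdot x y by rewrite /s mulrC divfK.
rewrite mdot_mcross; move: zz_gt0; rewrite zzE; nra.
Qed.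

Lemma mdot_mcross_gt0 (x y : vec) :
  indep2 x y -> (exists u, mdot (x + u *: y) (x + u *: y) < 0) ->
  0 < mdot (mcross x y) (mcross x y).
Proof.
move=> xy [u tt]; rewrite -(mcrossDZl x y u).
by apply: mdot_mcross_gt0_timelike tt; apply: indep2_addZl.
Qed.

End Timelike.

Section AdjointRules.
Variable R : rcfType.

Lemma adjK (A : 'M[R[i]]_2) : adj (adj A) = A.
Proof. by apply/matrixP => i j; rewrite !mxE conjcK. Qed.

Lemma adjD (A B : 'M[R[i]]_2) : adj (A + B) = adj A + adj B.
Proof. by rewrite /adj linearD map_mxD. Qed.

Lemma adj_rsc r (A : 'M[R[i]]_2) : adj (rsc r A) = rsc r (adj A).
Proof. by rewrite /adj /rsc linearZ map_mxZ /= oppr0. Qed.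

End AdjointRules.

Section Coordinates.
Variable R : rcfType.
Local Notation C := R[i].

Definition su11_of_rV (v : 'rV[R]_3) : 'M[C]_2 :=
  rsc (v 0 0) (Kx R) + rsc (v 0 1) (Ky R) + rsc (v 0 2) (Kz R).

Lemma su11E A : su11 A <-> exists v, A = su11_of_rV v.
Proof.
split=> [[a [b [c ->]]] | [v ->]]; last by exists (v 0 0), (v 0 1), (v 0 2).
by exists (\row_i [:: a; b; c]`_i); rewrite /su11_of_rV !mxE.
Qed.

Lemma su11_of_rVD x y : su11_of_rV (x + y) = su11_of_rV x + su11_of_rV y.
Proof.
rewrite /su11_of_rV /rsc !mxE !rmorphD !scalerDl.
by rewrite [RHS]addrACA [X in _ = X + _]addrACA.
Qed.

Lemma su11_of_rV0 : su11_of_rV 0 = 0.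
Proof. by rewrite /su11_of_rV /rsc !mxE rmorph0 !scale0r !addr0. Qed.

Lemma su11_of_rVZ r x : rsc r (su11_of_rV x) = su11_of_rV (r *: x).
Proof. by rewrite /su11_of_rV /rsc !mxE !rmorphM !scalerDr !scalerA. Qed.

Local Ltac complex_field :=
  rewrite /real_complex_def; simpc; apply/eqP; rewrite eq_complex /=;
  apply/andP; split; apply/eqP; field; by rewrite ?pnatr_eq0.

Lemma su11_of_rVE v : su11_of_rV v =
  mx2 (Complex 0 (- (v 0 2 / 2))) (Complex (- (v 0 1 / 2)) (- (v 0 0 / 2)))
      (Complex (- (v 0 1 / 2)) (v 0 0 / 2)) (Complex 0 (v 0 2 / 2)).
Proof.
have halfE : Defs.half R = real_complex R 2^-1.
  by rewrite /Defs.half -(rmorph_nat (real_complex R)) fmorphV.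
apply/matrixP => i j; rewrite !mxE /= halfE /iC.
by case: i => [[|[|i]] ?] //=; case: j => [[|[|j]] ?] //=; complex_field.
Qed.

Lemma su11_of_rV_inj : injective su11_of_rV.
Proof.
move=> x y /(congr1 (fun A : 'M[C]_2 => (A 0 0, A 0 1))); rewrite !su11_of_rVE !mxE /=.
by case=> e2 e1 e0; apply: rV3P; lra.
Qed.

Lemma inner_su11_of_rV v :
  inner (su11_of_rV v) (adj (su11_of_rV v)) = real_complex R (mdot v v).
Proof.
rewrite /inner adjK su11_of_rVE /mxtrace !big_ord_recr /= !mxE /=.
rewrite !big_ord_recr !big_ord0 /= !mxE /= -(rmorph_nat (real_complex R)) /mdot.
complex_field.
Qed.

Lemma lie_bracket_su11_of_rV x y :
  lie_bracket (su11_of_rV x) (su11_of_rV y) = su11_of_rV (mcross x y).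
Proof.
rewrite !su11_of_rVE; apply/matrixP => i j.
rewrite !mxE /= !big_ord_recr !big_ord0 /= !mxE /=.
by case: i => [[|[|i]] ?] //=; case: j => [[|[|j]] ?] //=; complex_field.
Qed.

End Coordinates.

Theorem lemma3p2 (R : rcfType) (M N : 'M[R[i]]_2) :
  su11 M -> su11 N -> rlin_indep2 M N ->
  (exists u : R, inner (M + rsc u N) (adj M + rsc u (adj N)) < 0) ->
  su11_basis M N (lie_bracket M N).
Proof.
move=> /su11E[x ->] /su11E[y ->] MN [u Hu].
have xy : indep2 x y.
  by move=> a b ab0; apply: MN; rewrite !su11_of_rVZ -su11_of_rVD ab0 su11_of_rV0.
have w_gt0 : 0 < mdot (mcross x y) (mcross x y).
  apply: mdot_mcross_gt0 xy _; exists u.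
  move: Hu; rewrite -adj_rsc -adjD su11_of_rVZ -su11_of_rVD inner_su11_of_rV.
  by rewrite ltcE => /andP[].
have xyw := indep3_mcross xy (lt0r_neq0 w_gt0).
rewrite lie_bracket_su11_of_rV; split.
- by apply/su11E; exists x.
- by apply/su11E; exists y.
- by apply/su11E; exists (mcross x y).
- move=> a b c; rewrite !su11_of_rVZ -!su11_of_rVD -(su11_of_rV0 R).
  by move/su11_of_rV_inj; apply: xyw.
- move=> _ /su11E[v ->]; have [a [b [c ->]]] := indep3_span xyw v.
  by exists a, b, c; rewrite !su11_of_rVZ -!su11_of_rVD.
Qed.
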